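(* Let $f:\mathbb{R}^n\to\mathbb{R}$ be a differentiable cost function and suppose the $G^t$ are unbiased estimators of $\nabla f$. Let $\mathcal{E}^t$ denote the event that $\|G^t(x^t)\|_\infty\le\eta$. Then the iterates of SMGD satisfy $$\mathbb{E}\left[\sum_{i\in\Omega^t}\mathrm{sgn}\big(G^t(x^t)_i\big)\frac{\partial f}{\partial x_i}(x^t)\,\middle|\,x^t,\mathcal{E}^t\right]=\frac{1}{\eta}\|\nabla f(x^t)\|_2^2,$$ where $\Omega^t=\{i\in\{1,\dots,n\}:\Delta^t_i\neq0\}$.
   Context: SMGD: Let $\alpha>0$, $\eta>0$, $x^0\in\alpha\mathbb{Z}^n$. At step $t$ a random vector $G^t(x^t)\in\mathbb{R}^n$ is drawn; then for each coordinate $i$, conditionally on $G^t$ and $x^t$, $\Delta^t_i\in\{0,1\}$ is Bernoulli with $\mathbb{P}[\Delta^t_i=1\mid G^t,x^t]=\min(|G^t(x^t)_i|/\eta,1)$, and $x^{t+1}_i=x^t_i-\alpha\,\mathrm{sgn}(G^t(x^t)_i)\Delta^t_i$. A random function $G$ is an unbiased estimator of $\nabla f$ if $\mathbb{E}[G(x)]=\nabla f(x)$ for all $x$. Standing assumptions: $\{G^t\}$ are i.i.d. copies of an unbiased estimator $G$, each $G^t$ is independent of $x^t$, and $\mathbb{E}[G^t(x^t)\mid x^t,\mathcal{E}^t]=\nabla f(x^t)$. *)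

From HB Require Import structures.
From mathcomp Require Import all_boot all_order all_algebra.
From mathcomp Require Import all_classical all_reals all_analysis.
Set Implicit Arguments. Unset Strict Implicit. Unset Printing Implicit Defensive.
Import Order.TTheory GRing.Theory Num.Theory.
Import numFieldNormedType.Exports.
Local Open Scope classical_set_scope.
Local Open Scope ring_scope.

(* Vectors of R^n are row vectors 'rV[R]_n; coordinate i of v is v 0 i. *)

Definition partial (R : realType) (n : nat) (i : 'I_n) (f : 'rV[R]_n -> R)
  (x : 'rV[R]_n) : R := derive f x (delta_mx 0 i).

Definition sigma_pair (R : realType) (n : nat) (T : Type)
  (X Y : T -> 'rV[R]_n) : set (set T) :=
  <<s [set B | exists (j : 'I_n) (A : set R), measurable A /\
               (B = (fun w => X w 0 j) @^-1` A \/ B = (fun w => Y w 0 j) @^-1` A)] >>.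

Definition cond_expect (R : realType) (d : measure_display)
  (T : measurableType d) (P : probability T R) (A : set T) (X : T -> R) : R :=
  fine (\int[P]_(w in A) (X w)%:E) / fine (P A).

(* The event {x^t = x} /\ E^t, where E^t = {||G^t(x^t)||_oo <= eta};
   on 'rV[R]_n the library norm `|v| is the sup norm (mx_norm). *)
Definition cond_event (R : realType) (n : nat) (T : Type)
  (xt Gt : T -> 'rV[R]_n) (eta : R) (x : 'rV[R]_n) : set T :=
  [set w | xt w = x] `&` [set w | `|Gt w| <= eta].

From HB Require Import structures.
From mathcomp Require Import all_boot all_order all_algebra.
From mathcomp Require Import all_classical all_reals all_analysis.
From mathcomp Require Import measurable_realfun.
Import Order.TTheory GRing.Theory Num.Theory.
Import numFieldNormedType.Exports.
Local Open Scope classical_set_scope.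
Local Open Scope ring_scope.

(* On the event A = {x^t = x} /\ {||G^t(x^t)||_oo <= eta} every coordinate g_i of
   G^t(x^t) satisfies |g_i| <= eta, so the coin probability min(|g_i|/eta, 1) is
   just |g_i|/eta.  Splitting A by the sign of g_i and applying the conditional law
   of Delta_i on A /\ {g_i > 0} and A /\ {g_i < 0}, which lie in
   sigma(G^t(x^t), x^t), gives E[sgn(g_i) Delta_i 1_A] = E[g_i 1_A] / eta.  On A the
   factor d_i f(x^t) is the constant d_i f(x), so linearity and E[g_i | A] = d_i f(x)
   yield sum_i d_i f(x)^2 / eta. *)

Lemma in_set_pred (T : Type) (b : pred T) (x : T) : (x \in [set y | b y]) = b x.
Proof. by apply/idP/idP; rewrite inE. Qed.

Lemma mx_norm_le {R : realFieldType} {m n : nat} {M : 'M[R]_(m, n)} {e : R} :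
  0 <= e -> `|M| <= e <-> forall i j, `|M i j| <= e.
Proof.
move=> e0; change `|M| with (mx_norm M); rewrite mx_normrE; split => [Me i j|Me].
  exact: le_trans (le_bigmax _ (fun ij : 'I_m * 'I_n => `|M ij.1 ij.2|) (i, j)) Me.
by apply/bigmax_leP; split => // -[i j] _; exact: Me.
Qed.

Section sigma_pair.
Context {R : realType} {n : nat} {T : pointedType} {X Y : T -> 'rV[R]_n}.

Let coordinate_preimages := [set B | exists (j : 'I_n) (A : set R), measurable A /\
  (B = (fun w => X w 0 j) @^-1` A \/ B = (fun w => Y w 0 j) @^-1` A)].

Lemma sigma_pair_preimageX (j : 'I_n) (A : set R) : measurable A ->
  sigma_pair X Y ((fun w => X w 0 j) @^-1` A).
Proof. by move=> mA; apply: sub_gen_smallest; exists j, A; split => //; left. Qed.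

Lemma sigma_pair_preimageY (j : 'I_n) (A : set R) : measurable A ->
  sigma_pair X Y ((fun w => Y w 0 j) @^-1` A).
Proof. by move=> mA; apply: sub_gen_smallest; exists j, A; split => //; right. Qed.

Lemma sigma_pairI {B C : set T} :
  sigma_pair X Y B -> sigma_pair X Y C -> sigma_pair X Y (B `&` C).
Proof. exact: (@measurableI _ (g_sigma_algebraType coordinate_preimages) B C). Qed.

Lemma sigma_pair_bigcap (F : 'I_n -> set T) :
  (forall j, sigma_pair X Y (F j)) -> sigma_pair X Y (\bigcap_(j in [set: 'I_n]) F j).
Proof.
move=> FS; exact: (@fin_bigcap_measurable _ (g_sigma_algebraType coordinate_preimages)
  _ setT F finite_finset (fun j _ => FS j)).
Qed.

Lemma sigma_pair_eqY (y : 'rV[R]_n) : sigma_pair X Y [set w | Y w = y].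
Proof.
have -> : [set w | Y w = y] =
    \bigcap_(j in [set: 'I_n]) (fun w => Y w 0 j) @^-1` [set y 0 j].
  apply/seteqP; split => [w Yy j _|w Yy]; first by rewrite /= Yy.
  by apply/rowP => j; exact: Yy j I.
by apply: sigma_pair_bigcap => j; apply: sigma_pair_preimageY; exact: measurable_set1.
Qed.

Lemma sigma_pair_normX_le {e : R} : 0 <= e -> sigma_pair X Y [set w | `|X w| <= e].
Proof.
move=> e0; have -> : [set w | `|X w| <= e] =
    \bigcap_(j in [set: 'I_n]) (fun w => X w 0 j) @^-1` `[- e, e].
  apply/seteqP; split => w /=.
    by move/(mx_norm_le e0) => Xe j _; rewrite /= in_itv /= -ler_norml Xe.
  move=> Xe; apply/(mx_norm_le e0) => i j; rewrite (ord1 i).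
  by have := Xe j I; rewrite /= in_itv /= -ler_norml.
by apply: sigma_pair_bigcap => j; apply: sigma_pair_preimageX; exact: measurable_itv.
Qed.

Lemma sigma_pair_gt0X (j : 'I_n) : sigma_pair X Y [set w | 0 < X w 0 j].
Proof.
have -> : [set w | 0 < X w 0 j] = (fun w => X w 0 j) @^-1` `]0, +oo[.
  by apply/seteqP; split => w /=; rewrite in_itv /= andbT.
by apply: sigma_pair_preimageX; exact: measurable_itv.
Qed.

Lemma sigma_pair_lt0X (j : 'I_n) : sigma_pair X Y [set w | X w 0 j < 0].
Proof.
have -> : [set w | X w 0 j < 0] = (fun w => X w 0 j) @^-1` `]-oo, 0[.
  by apply/seteqP; split => w /=; rewrite in_itv.
by apply: sigma_pair_preimageX; exact: measurable_itv.
Qed.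

End sigma_pair.

Lemma sigma_pair_measurable {R : realType} {n : nat} {d} {T : measurableType d}
    {X Y : T -> 'rV[R]_n} :
  (forall j, measurable_fun setT (fun w => X w 0 j)) ->
  (forall j, measurable_fun setT (fun w => Y w 0 j)) ->
  sigma_pair X Y `<=` measurable.
Proof.
move=> mX mY; apply: smallest_sub; first exact: sigma_algebra_measurable.
by move=> _ [j [A [mA [->|->]]]]; rewrite -[_ @^-1` _]setTI; [exact: mX | exact: mY].
Qed.

Section Rintegral_complements.
Context d (T : measurableType d) (R : realType) (mu : {measure set T -> \bar R}).

Lemma Rintegral_indic (D A : set T) : measurable D -> measurable A ->
  \int[mu]_(x in D) \1_A x = fine (mu (A `&` D)).
Proof. by move=> mD mA; rewrite /Rintegral integral_indic. Qed.

Lemma Rintegral_sum (I : Type) (s : seq I) (f : I -> T -> R) (D : set T) :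
  measurable D -> (forall i, mu.-integrable D (EFin \o f i)) ->
  \int[mu]_(x in D) (\sum_(i <- s) f i x) = \sum_(i <- s) \int[mu]_(x in D) f i x.
Proof.
move=> mD intf; elim: s => [|i s IHs].
  by under eq_Rintegral do rewrite big_nil; rewrite big_nil Rintegral_cst // mul0r.
under eq_Rintegral do rewrite big_cons.
rewrite RintegralD ?IHs ?big_cons //.
apply: (eq_integrable mD (fun x => \sum_(i <- s) (f i x)%:E)).
  by move=> x _; rewrite /= sumEFin.
by apply: integrable_sum => // j _; exact: intf.
Qed.

End Rintegral_complements.

Lemma integrable_bounded {d} {T : measurableType d} {R : realType}
    {mu : {finite_measure set T -> \bar R}} {D : set T} {h : T -> R} {c : R} :
  measurable D -> measurable_fun D h -> (forall x, D x -> `|h x| <= c) ->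
  mu.-integrable D (EFin \o h).
Proof.
move=> mD mh hc.
apply: (le_integrable mD _ _ (finite_measure_integrable_cst mu c mD)).
  exact/measurable_EFinP.
by move=> x Dx /=; rewrite lee_fin (le_trans (hc x Dx)) // ler_norm.
Qed.

Section sign_weighted_coin.
Context {d : measure_display} {T : measurableType d} {R : realType}
  {mu : {finite_measure set T -> \bar R}}.
Context {F : set (set T)} {E B : set T} {g : T -> R} {eta : R}.
Hypotheses (F_measurable : F `<=` measurable) (mE : measurable E) (mB : measurable B)
  (mg : measurable_fun B g) (eta_gt0 : 0 < eta) (g_le_eta : forall w, B w -> `|g w| <= eta).
Hypotheses (F_Bpos : F (B `&` [set w | 0 < g w])) (F_Bneg : F (B `&` [set w | g w < 0])).
Hypothesis E_cond : forall S, F S ->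
  mu (E `&` S) = (\int[mu]_(w in S) (Order.min (`|g w| / eta) 1)%:E)%E.

Let Bpos := B `&` [set w | 0 < g w].
Let Bneg := B `&` [set w | g w < 0].
Let mBpos : measurable Bpos := F_measurable _ F_Bpos.
Let mBneg : measurable Bneg := F_measurable _ F_Bneg.

Let integrable_indic_on {A : set T} : measurable A -> mu.-integrable B (EFin \o \1_A).
Proof. by move=> mA; apply: integrableS (integrable_indic mu mA). Qed.

Let sg_indicE w : B w ->
  Num.sg (g w) * \1_E w = \1_(E `&` Bpos) w - \1_(E `&` Bneg) w.
Proof.
move=> Bw; rewrite !indicE !in_setI (mem_set Bw) !in_set_pred /=.
have [g_gt0|g_lt0|->] := ltrgt0P (g w).
- by rewrite gtr0_sg //; case: (w \in E); rewrite ?mulr1 ?mulr0 subr0.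
- by rewrite ltr0_sg //; case: (w \in E); rewrite ?mulr1 ?mulr0 sub0r ?oppr0.
- by rewrite sgr0 mul0r subrr.
Qed.

Let div_eta_signE w : B w ->
  g w / eta = g w / eta * \1_Bpos w - (- g w / eta) * \1_Bneg w.
Proof.
move=> Bw; rewrite !indicE !in_setI (mem_set Bw) !in_set_pred /=.
have [g_gt0|g_lt0|->] := ltrgt0P (g w).
- by rewrite mulr1 mulr0 subr0.
- by rewrite mulr0 mulr1 sub0r mulNr opprK.
- by rewrite mul0r mul0r mulr0 subr0.
Qed.

Let Rintegral_indic_condE {S : set T} {k : T -> R} : S `<=` B -> F S ->
    {in S, forall w, Order.min (`|g w| / eta) 1 = k w} ->
  \int[mu]_(w in B) \1_(E `&` S) w = \int[mu]_(w in B) (k w * \1_S w).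
Proof.
move=> SB FS pk; have mS := F_measurable _ FS.
transitivity (\int[mu]_(w in B `&` S) k w); last first.
  by rewrite Rintegral_mkcondr patch_indic.
rewrite (setIidr SB) -(eq_Rintegral _ pk) Rintegral_indic //; last exact: measurableI.
by rewrite -setIA (setIidl SB); congr fine; exact: E_cond.
Qed.

Let g_div_eta_le1 w : B w -> `|g w / eta| <= 1.
Proof.
by move=> Bw; rewrite normrM normfV (gtr0_norm eta_gt0) ler_pdivrMr // mul1r g_le_eta.
Qed.

Let integrable_scaled_indic (S : set T) (k : T -> R) : measurable S ->
    measurable_fun B k -> (forall w, B w -> `|k w| <= 1) ->
  mu.-integrable B (EFin \o (fun w => k w * \1_S w)).
Proof.
move=> mS mk k_le1; apply: (integrable_bounded (c := 1)) => //.
  by apply: measurable_funM => //; exact: measurable_indic.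
move=> w Bw; rewrite normrM indicE; case: (w \in S) => /=.
  by rewrite normr1 mulr1 k_le1.
by rewrite normr0 mulr0.
Qed.

Lemma integrable_sg_indic :
  mu.-integrable B (EFin \o (fun w => Num.sg (g w) * \1_E w)).
Proof.
apply: (eq_integrable mB (fun w => (\1_(E `&` Bpos) w)%:E - (\1_(E `&` Bneg) w)%:E)%E).
  by move=> w /set_mem Bw; rewrite /= sg_indicE.
by apply: integrableB => //; apply: integrable_indic_on; exact: measurableI.
Qed.

Let min_div_eta_pos : {in Bpos, forall w, Order.min (`|g w| / eta) 1 = g w / eta}.
Proof.
move=> w /set_mem [Bw g_gt0]; rewrite gtr0_norm //; apply: min_l.
by rewrite ler_pdivrMr // mul1r -(gtr0_norm g_gt0) g_le_eta.
Qed.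

Let min_div_eta_neg : {in Bneg, forall w, Order.min (`|g w| / eta) 1 = - g w / eta}.
Proof.
move=> w /set_mem [Bw g_lt0]; rewrite ltr0_norm //; apply: min_l.
by rewrite ler_pdivrMr // mul1r -(ltr0_norm g_lt0) g_le_eta.
Qed.

Lemma Rintegral_sg_indic :
  \int[mu]_(w in B) (Num.sg (g w) * \1_E w) = (\int[mu]_(w in B) g w) / eta.
Proof.
have int_E_pos := integrable_indic_on (measurableI _ _ mE mBpos).
have int_E_neg := integrable_indic_on (measurableI _ _ mE mBneg).
have int_pos : mu.-integrable B (EFin \o (fun w => g w / eta * \1_Bpos w)).
  apply: integrable_scaled_indic => //.
  by apply: measurable_funM => //; exact: measurable_cst.
have int_neg : mu.-integrable B (EFin \o (fun w => - g w / eta * \1_Bneg w)).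
  apply: integrable_scaled_indic => // [|w Bw]; last by rewrite mulNr normrN g_div_eta_le1.
  by apply: measurable_funM => //; apply: measurableT_comp.
transitivity (\int[mu]_(w in B) (\1_(E `&` Bpos) w - \1_(E `&` Bneg) w)).
  by apply: eq_Rintegral => w /set_mem; exact: sg_indicE.
rewrite RintegralB // (Rintegral_indic_condE (@subIsetl _ _ _) F_Bpos min_div_eta_pos).
rewrite (Rintegral_indic_condE (@subIsetl _ _ _) F_Bneg min_div_eta_neg) -RintegralB //.
rewrite -RintegralZr //; last exact: (integrable_bounded (c := eta)).
by apply: eq_Rintegral => w /set_mem Bw; rewrite -div_eta_signE.
Qed.

End sign_weighted_coin.

Section conditional_expectation.
Context d (T : measurableType d) (R : realType) (P : probability T R).

Lemma cond_expectE (A : set T) (f : T -> R) :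
  cond_expect P A f = (\int[P]_(w in A) f w) / fine (P A).
Proof. by []. Qed.

Lemma eq_cond_expect (A : set T) (f g : T -> R) :
  {in A, f =1 g} -> cond_expect P A f = cond_expect P A g.
Proof. by move=> fg; rewrite !cond_expectE (eq_Rintegral _ fg). Qed.

Lemma cond_expect_lincomb (I : Type) (s : seq I) (A : set T) (f : I -> T -> R) (c : I -> R) :
  measurable A -> (forall i, P.-integrable A (EFin \o f i)) ->
  cond_expect P A (fun w => \sum_(i <- s) f i w * c i) =
  \sum_(i <- s) cond_expect P A (f i) * c i.
Proof.
move=> mA intf; rewrite cond_expectE Rintegral_sum //; last first.
  move=> i; apply: (eq_integrable mA ((EFin \o f i) \* cst (c i)%:E)%E).
    by move=> w _; rewrite /= EFinM.
  exact: integrableZr.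
rewrite mulr_suml; apply: eq_bigr => i _.
by rewrite RintegralZr // cond_expectE mulrAC.
Qed.

End conditional_expectation.

Theorem lemma4p5 (R : realType) (n : nat) (d : measure_display)
  (T : measurableType d) (P : probability T R)
  (alpha eta : R) (f : 'rV[R]_n -> R)
  (G : T -> 'rV[R]_n -> 'rV[R]_n) (xt : T -> 'rV[R]_n) (Delta : T -> 'I_n -> bool) :
  0 < alpha -> 0 < eta ->
  (forall x : 'rV[R]_n, differentiable f x) ->
  (* G is an unbiased estimator of grad f *)
  (forall (x : 'rV[R]_n) (j : 'I_n),
     P.-integrable setT (fun w => (G w x 0 j)%:E) /\
     (\int[P]_(w in setT) (G w x 0 j)%:E = (partial j f x)%:E)%E) ->
  (* x^t is a random vector with values in alpha Z^n *)
  (forall j : 'I_n, measurable_fun setT (fun w => xt w 0 j)) ->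
  (forall (w : T) (j : 'I_n), exists k : int, xt w 0 j = k%:~R * alpha) ->
  (forall j : 'I_n, measurable_fun setT (fun w => G w (xt w) 0 j)) ->
  (* Delta^t_i is Bernoulli with P[Delta_i = 1 | G^t(x^t), x^t] = min(|G^t(x^t)_i|/eta, 1) *)
  (forall i : 'I_n, measurable [set w | Delta w i]) ->
  (forall (i : 'I_n) (B : set T),
     sigma_pair (fun w => G w (xt w)) xt B ->
     (P ([set w | Delta w i] `&` B) =
      \int[P]_(w in B) (Order.min (`|G w (xt w) 0 i| / eta) 1)%:E)%E) ->
  (* standing assumption: E[G^t(x^t) | x^t, E^t] = grad f(x^t) *)
  (forall x : 'rV[R]_n,
     (0 < P (cond_event xt (fun w => G w (xt w)) eta x))%E ->
     forall j : 'I_n,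
       cond_expect P (cond_event xt (fun w => G w (xt w)) eta x)
         (fun w => G w (xt w) 0 j) = partial j f x) ->
  (* conclusion *)
  forall x : 'rV[R]_n,
    (0 < P (cond_event xt (fun w => G w (xt w)) eta x))%E ->
    cond_expect P (cond_event xt (fun w => G w (xt w)) eta x)
      (fun w => \sum_(i < n | Delta w i)
                  Num.sg (G w (xt w) 0 i) * partial i f (xt w))
    = (\sum_(i < n) (partial i f x) ^+ 2) / eta.
Proof.
move=> _ eta_gt0 _ _ mxt _ mG mDelta Delta_cond G_cond x PA_gt0.
set Gx := fun w => G w (xt w); set A := cond_event xt Gx eta x.
have sigma_measurable := sigma_pair_measurable mG mxt.
have sigmaA : sigma_pair Gx xt A.
  rewrite /A /cond_event.
  exact: sigma_pairI (sigma_pair_eqY x) (sigma_pair_normX_le (ltW eta_gt0)).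
have mA : measurable A := sigma_measurable _ sigmaA.
have Gx_le_eta i w : A w -> `|Gx w 0 i| <= eta.
  by move=> [_ /(mx_norm_le (ltW eta_gt0))]; apply.
pose coin i := fun w => Num.sg (Gx w 0 i) * \1_[set w | Delta w i] w.
have sigmaA_pos i := sigma_pairI sigmaA (sigma_pair_gt0X i).
have sigmaA_neg i := sigma_pairI sigmaA (sigma_pair_lt0X i).
have Rintegral_coin i := Rintegral_sg_indic sigma_measurable (mDelta i) mA
  (measurable_funS measurableT (@subsetT _ A) (mG i)) eta_gt0 (Gx_le_eta i)
  (sigmaA_pos i) (sigmaA_neg i) (Delta_cond i).
transitivity (cond_expect P A (fun w => \sum_(i < n) coin i w * partial i f x)).
  apply: eq_cond_expect => w /set_mem [/= xw _]; rewrite big_mkcond /=.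
  apply: eq_bigr => i _; rewrite /coin /Gx indicE in_set_pred xw.
  by case: (Delta w i); rewrite ?mulr1 ?mulr0 ?mul0r.
rewrite cond_expect_lincomb // => [|i]; last first.
  exact: integrable_sg_indic sigma_measurable (mDelta i) mA (sigmaA_pos i) (sigmaA_neg i).
rewrite mulr_suml; apply: eq_bigr => i _.
have -> : cond_expect P A (coin i) = partial i f x / eta.
  by rewrite -G_cond // !cond_expectE [RHS]mulrAC; congr (_ * _); exact: Rintegral_coin.
by rewrite expr2 mulrAC.
Qed.
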